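(* Let $A$ be an $n\times n$ Dickson matrix over $\mathbb{F}_{q^n}$ and, for $1\le k\le n$, let $A_{k-1}=A[\{0,1,\dots,k-1\}|\{0,1,\dots,k-1\}]$. Then $\mathrm{rank}\,A=\max\{k\in\{1,\dots,n\}:\det A_{k-1}\neq 0\}$ (with the value $0$ if no such $k$ exists).
   Context: Rows and columns are indexed by $\mathbb{Z}_n$. A Dickson matrix is the matrix $A$ with $A[i|j]=a_{j-i}^{q^i}$ (indices mod $n$) associated to a $q$-polynomial $\sum_{j=0}^{n-1}a_jx^{q^j}\in\mathbb{F}_{q^n}[x]$. $A[\alpha|\beta]$ denotes the submatrix with rows $\alpha$ and columns $\beta$. *)

From mathcomp Require Import all_boot all_order all_algebra all_field.
Set Implicit Arguments. Unset Strict Implicit. Unset Printing Implicit Defensive.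
Import GRing.Theory.
Local Open Scope ring_scope.

Lemma ord_pos_n (n : nat) (i : 'I_n) : (0 < n)%N.
Proof. by apply: leq_ltn_trans (ltn_ord i). Qed.

Definition subZn (n : nat) (j i : 'I_n) : 'I_n :=
  Ordinal (ltn_pmod (j + n - i) (ord_pos_n i)).

(* Dickson matrix of the q-polynomial sum_{j<n} a_j x^(q^j):
   A[i|j] = a_{j-i}^(q^i), indices mod n. *)
Definition dickson_mx (L : nzRingType) (q n : nat) (a : 'I_n -> L) : 'M[L]_n :=
  \matrix_(i < n, j < n) (a (subZn j i)) ^+ (q ^ i).

Lemma ord_leq_n (n : nat) (k : 'I_n.+1) : (k <= n)%N.
Proof. exact: ltn_ord k. Qed.

Definition lead_submx (R : Type) (n : nat) (A : 'M[R]_n) (k : 'I_n.+1) : 'M[R]_k :=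
  \matrix_(i < k, j < k) A (widen_ord (ord_leq_n k) i) (widen_ord (ord_leq_n k) j).

Definition prime_power (q : nat) : Prop :=
  exists p e : nat, prime p /\ (0 < e)%N /\ q = (p ^ e)%N.

From HB Require Import structures.
From mathcomp Require Import all_boot all_order all_algebra all_field perm.
Set Implicit Arguments. Unset Strict Implicit. Unset Printing Implicit Defensive.
Import GRing.Theory.
Local Open Scope ring_scope.

(* A Dickson matrix is a twisted circulant: A[i+1|j+1] = A[i|j]^q,
   i.e. row i+1 is row i after the q-Frobenius and a cyclic shift of the
   columns, and this twist preserves inclusions of row spaces.  So if row k
   lies in the span of rows 0..k-1, that span is twist-stable and contains
   every row.  Hence the first r = rank A rows of A span its row space, and,
   A^T being twisted circulant too, the first r columns span its column space;
   this forces the leading r x r block to be invertible, while no larger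
   leading block can be. *)

Lemma ordS_val n (i : 'I_n) : (i.+1 < n)%N -> ordS i = i.+1 :> nat.
Proof. by move=> lt_in; rewrite /= modn_small. Qed.

Section LeadingSubmatrix.
Variables (F : fieldType) (n : nat).
Implicit Types (M : 'M[F]_n) (k : 'I_n.+1).

Lemma lead_submxE M k :
  lead_submx M k = (pid_mx k : 'M_(k, n)) *m M *m (pid_mx k : 'M_(n, k)).
Proof.
have pidE : pid_mx k = rowsub (widen_ord (ord_leq_n k)) 1%:M :> 'M[F]_(k, n).
  exact: pid_mxErow.
rewrite -[X in _ *m X]tr_pid_mx pidE -rowsubE.
apply/matrixP=> i j; rewrite !mxE (bigD1 (widen_ord (ord_leq_n k) j)) //= big1.
  by rewrite !mxE eqxx mulr1 addr0.
by move=> l /negPf; rewrite !mxE eq_sym => ->; rewrite mulr0.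
Qed.

Lemma rank_lead_submx M k : (\rank (lead_submx M k) <= \rank M)%N.
Proof. by rewrite lead_submxE (leq_trans (mxrankM_maxl _ _)) ?mxrankM_maxr. Qed.

Lemma lead_submx_unit M k :
  (M <= (pid_mx k : 'M_n) *m M)%MS -> \rank (M *m (pid_mx k : 'M_n)) = k ->
  lead_submx M k \in unitmx.
Proof.
case/submxP=> X defM rank_cols; rewrite -row_free_unit /row_free.
have pidE : pid_mx k = (pid_mx k : 'M_(n, k)) *m (pid_mx k : 'M_(k, n)) :> 'M[F]_n.
  by rewrite pid_mx_id.
have colsE : M *m pid_mx k = X *m pid_mx k *m lead_submx M k *m (pid_mx k : 'M_(k, n)).
  by rewrite {1}defM [in LHS]pidE lead_submxE !mulmxA.
rewrite eqn_leq rank_leq_row /= -{1}rank_cols colsE.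
by rewrite (leq_trans (mxrankM_maxl _ _)) ?mxrankM_maxr.
Qed.

Lemma rank_eq_max_lead_minor M :
  (forall k, k = \rank M :> nat -> \det (lead_submx M k) != 0) ->
  \rank M = (\max_(k : 'I_n.+1 | (0 < k)%N && (\det (lead_submx M k) != 0%R)) k)%N.
Proof.
move=> det_rank; apply/eqP; rewrite eqn_leq; apply/andP; split; last first.
  apply/bigmax_leqP=> k /andP[_ det_k].
  have : lead_submx M k \in unitmx by rewrite unitmxE unitfE.
  by rewrite -row_free_unit => /eqP <-; apply: rank_lead_submx.
have [-> // | rank_gt0] := posnP (\rank M).
have rank_lt : (\rank M < n.+1)%N by rewrite ltnS rank_leq_row.
by apply: (@leq_bigmax_cond _ _ _ (Ordinal rank_lt)); rewrite rank_gt0 det_rank.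
Qed.

End LeadingSubmatrix.

Section TwistedCirculant.
Variables (F : fieldType) (f : {rmorphism F -> F}) (n : nat).

Definition twisted_circulant (M : 'M[F]_n) :=
  forall i j, M (ordS i) (ordS j) = f (M i j).

Lemma twisted_circulant_tr M : twisted_circulant M -> twisted_circulant M^T.
Proof. by move=> twM i j; rewrite !mxE twM. Qed.

Definition cycle_pred : {perm 'I_n} := perm (@ord_pred_inj n).

Definition twist m (X : 'M[F]_(m, n)) := col_perm cycle_pred (map_mx f X).

Lemma twist_submx m1 m2 (X : 'M_(m1, n)) (Y : 'M_(m2, n)) :
  (X <= Y)%MS -> (twist X <= twist Y)%MS.
Proof. by rewrite -(map_submx f) => XY; rewrite /twist !col_permE submxMr. Qed.

Lemma row_twist m (X : 'M_(m, n)) i : row i (twist X) = twist (row i X).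
Proof. by apply/rowP=> j; rewrite !mxE. Qed.

Variables (M : 'M[F]_n) (twM : twisted_circulant M).

Lemma row_ordS i : row (ordS i) M = twist (row i M).
Proof. by apply/rowP=> j; rewrite !mxE permE -{1}(ord_predK j) twM. Qed.

Definition first_rows k : 'M[F]_n := pid_mx k *m M.

Lemma row_first_rows k (i : 'I_n) :
  row i (first_rows k) = if (i < k)%N then row i M else 0.
Proof.
apply/rowP=> j; rewrite !mxE (bigD1 i) //= big1 => [|l /negPf].
  by rewrite !mxE eqxx /=; case: ifP; rewrite !mxE ?mul1r ?mul0r addr0.
by rewrite !mxE eq_sym -val_eqE => ->; rewrite mul0r.
Qed.

Lemma row_sub_first_rows k (i : 'I_n) : (i < k)%N -> (row i M <= first_rows k)%MS.
Proof. by move=> lt_ik; have := row_sub i (first_rows k); rewrite row_first_rows lt_ik. Qed.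

Lemma rank_first_rows_le k : (\rank (first_rows k) <= k)%N.
Proof.
apply: leq_trans (mxrankM_maxl _ _) _.
have [le_kn | /ltnW lt_nk] := leqP k n; first by rewrite rank_pid_mx.
exact: leq_trans (rank_leq_row _) lt_nk.
Qed.

Lemma twist_first_rows (k : 'I_n) :
  (row k M <= first_rows k)%MS -> (twist (first_rows k) <= first_rows k)%MS.
Proof.
move=> row_k_sub; apply/row_subP=> i; rewrite row_twist row_first_rows.
case: ifP => [lt_ik | _]; last by rewrite /twist map_mx0 col_permE mul0mx sub0mx.
have ordS_i : ordS i = i.+1 :> nat by apply: ordS_val; apply: leq_ltn_trans lt_ik _.
rewrite -row_ordS; case: (ltngtP (ordS i) k) => [lt_Sik | | eq_Sik].
- exact: row_sub_first_rows.
- by rewrite ordS_i ltnNge lt_ik.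
- by rewrite (_ : ordS i = k) //; apply: val_inj.
Qed.

Lemma first_rows_span (k : 'I_n) :
  (row k M <= first_rows k)%MS -> (M <= first_rows k)%MS.
Proof.
move=> row_k_sub; have twist_sub := twist_first_rows row_k_sub.
have row_le_k (i : 'I_n) : (i <= k)%N -> (row i M <= first_rows k)%MS.
  rewrite leq_eqVlt => /orP[/eqP/val_inj-> // | ]; exact: row_sub_first_rows.
suff row_sub_d d (i : 'I_n) : i = d :> nat -> (row i M <= first_rows k)%MS.
  by apply/row_subP=> i; apply: row_sub_d.
elim: d i => [|d IHd] i def_i; first by apply: row_le_k; rewrite def_i.
have lt_dn : (d < n)%N by apply: ltnW; rewrite -def_i.
have -> : i = ordS (Ordinal lt_dn).
  by apply/eqP; rewrite -val_eqE /= -def_i modn_small.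
by rewrite row_ordS (submx_trans _ twist_sub) ?twist_submx ?IHd.
Qed.

Lemma rank_first_rows k : (k <= \rank M)%N -> \rank (first_rows k) = k.
Proof.
elim: k => [|k IHk] lt_k_rank; first by rewrite /first_rows pid_mx_0 mul0mx mxrank0.
have lt_kn : (k < n)%N := leq_trans lt_k_rank (rank_leq_row M).
have row_k_new : ~~ (row (Ordinal lt_kn) M <= first_rows k)%MS.
  apply/negP=> /first_rows_span/mxrankS; apply/negP; rewrite -ltnNge.
  exact: leq_ltn_trans (rank_first_rows_le k) lt_k_rank.
have first_rows_S : (first_rows k <= first_rows k.+1)%MS.
  have pid_kS : pid_mx k = (pid_mx k : 'M_n) *m pid_mx k.+1 :> 'M[F]_n.
    by rewrite mul_pid_mx (minn_idPl (leqnSn k)) pid_mx_minh.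
  by rewrite /first_rows pid_kS -mulmxA submxMl.
have first_rows_lt : (first_rows k < first_rows k.+1)%MS.
  rewrite ltmxE first_rows_S; apply: contra row_k_new => /(submx_trans _); apply.
  exact: row_sub_first_rows.
apply/eqP; rewrite eqn_leq rank_first_rows_le -{1}(IHk (ltnW lt_k_rank)).
exact: rank_ltmx.
Qed.

Lemma first_rows_rank_span : (M <= first_rows (\rank M))%MS.
Proof.
have sub_M : (first_rows (\rank M) <= M)%MS by rewrite submxMl.
by have := mxrank_leqif_sup sub_M; rewrite rank_first_rows // => /leqif_refl.
Qed.

End TwistedCirculant.

Lemma twisted_circulant_lead_minor (F : fieldType) (f : {rmorphism F -> F}) n
    (M : 'M[F]_n) (k : 'I_n.+1) :
  twisted_circulant f M -> k = \rank M :> nat -> \det (lead_submx M k) != 0.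
Proof.
move=> twM def_k; rewrite -unitfE -unitmxE; apply: lead_submx_unit.
  by rewrite def_k; apply: first_rows_rank_span twM.
have le_k_rank : (k <= \rank M^T)%N by rewrite mxrank_tr def_k.
have := rank_first_rows (twisted_circulant_tr twM) le_k_rank.
by rewrite -mxrank_tr trmx_mul tr_pid_mx trmxK => ->.
Qed.

Lemma twisted_circulant_rank (F : fieldType) (f : {rmorphism F -> F}) n
    (M : 'M[F]_n) :
  twisted_circulant f M ->
  \rank M = (\max_(k : 'I_n.+1 | (0 < k)%N && (\det (lead_submx M k) != 0%R)) k)%N.
Proof.
by move=> twM; apply: rank_eq_max_lead_minor => k; apply: twisted_circulant_lead_minor.
Qed.

Section PcharPower.
Variables (R : comNzSemiRingType) (q : nat).

Definition pchar_pow of [pchar R].-nat q := fun x : R => x ^+ q.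

Variable pcharRq : [pchar R].-nat q.

Lemma pchar_pow_is_nmod_morphism : nmod_morphism (pchar_pow pcharRq).
Proof.
split=> [|x y]; last exact: exprDn_pchar.
by case/andP: pcharRq => q_gt0 _; rewrite /pchar_pow expr0n gtn_eqF.
Qed.

Lemma pchar_pow_is_monoid_morphism : monoid_morphism (pchar_pow pcharRq).
Proof. by split=> [|x y]; [exact: expr1n | exact: exprMn]. Qed.

HB.instance Definition _ := GRing.isNmodMorphism.Build R R (pchar_pow pcharRq)
  pchar_pow_is_nmod_morphism.
HB.instance Definition _ := GRing.isMonoidMorphism.Build R R (pchar_pow pcharRq)
  pchar_pow_is_monoid_morphism.

End PcharPower.

Lemma subZnDr n (j i : 'I_n) : (subZn j i + i = j %[mod n])%N.
Proof. by rewrite modnDml subnK ?modnDr // (leq_trans (ltnW (ltn_ord i))) ?leq_addl. Qed.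

Lemma subZn_ordS n (j i : 'I_n) : subZn (ordS j) (ordS i) = subZn j i.
Proof.
have shiftS : (subZn (ordS j) (ordS i) + i.+1 = j.+1 %[mod n])%N.
  by rewrite -modnDmr -[(i.+1 %% n)%N]/(ordS i : nat) subZnDr modn_mod.
have shift : (subZn j i + i.+1 = j.+1 %[mod n])%N.
  by rewrite addnS -addn1 -modnDml subZnDr modnDml addn1.
apply/val_inj/eqP; rewrite -[X in X == _](modn_small (ltn_ord _)).
by rewrite -[X in _ == X](modn_small (ltn_ord _)) -(eqn_modDr i.+1) shiftS shift.
Qed.

Lemma dickson_mx_twisted_circulant (L : finFieldType) q n (a : 'I_n -> L)
    (pcharLq : [pchar L].-nat q) :
  #|L| = (q ^ n)%N -> twisted_circulant (pchar_pow pcharLq) (dickson_mx q a).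
Proof.
move=> cardL i j; rewrite !mxE subZn_ordS /= /pchar_pow -exprM -expnSr.
have [lt_Si_n | ] := ltnP i.+1 n; first by rewrite modn_small.
rewrite leq_eqVlt ltnNge ltn_ord orbF => /eqP def_n.
by rewrite -def_n modnn -cardL expf_card.
Qed.

Theorem mainTheorem7 (L : finFieldType) (q n : nat)
  (hq : prime_power q) (hn : (0 < n)%N) (hL : #|L| = (q ^ n)%N)
  (a : 'I_n -> L) :
  let A := dickson_mx q a in
  \rank A = (\max_(k : 'I_n.+1 | (0 < k)%N && (\det (lead_submx A k) != 0%R)) (k : nat))%N.
Proof.
have [p [e [p_prime [_ def_q]]]] := hq.
have pcharLp : p \in [pchar L].
  by apply: (@card_finPcharP _ p (e * n)); rewrite // hL def_q expnM.
have pcharLq : [pchar L].-nat q by rewrite def_q pnatX pnatE // pcharLp.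
exact: twisted_circulant_rank (dickson_mx_twisted_circulant a pcharLq hL).
Qed.
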